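(* Let $G=(V,E)$ be a graph with infinite edge motion and let $\gamma \in \operatorname{Aut} G$. Let $V_{\text{move}} = \{v \in V : \gamma(v) \neq v\}$, and let $C$ be the vertex set of a connected component of the induced subgraph $G[V_{\text{move}}]$. If $C$ is finite, then $C$ contains a vertex of infinite degree in $G$.
   Context: Graphs are simple and may be infinite. An automorphism $\gamma$ acts on edges by $\gamma(uv)=\gamma(u)\gamma(v)$; it moves an edge $e$ if $\gamma(e)\neq e$ as an unordered pair. A graph has infinite edge motion if every non-trivial automorphism moves infinitely many edges. *)

From Stdlib Require Import List Relations.Relation_Operators.
Import ListNotations.

Definition finite_set {X : Type} (P : X -> Prop) : Prop :=
  exists l : list X, forall x, P x -> In x l.

Definition infinite_set {X : Type} (P : X -> Prop) : Prop := ~ finite_set P.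

Record simple_graph (V : Type) (adj : V -> V -> Prop) : Prop := {
  sg_sym : forall u v, adj u v -> adj v u;
  sg_irrefl : forall v, ~ adj v v }.

Definition is_automorphism {V : Type} (adj : V -> V -> Prop) (g : V -> V) : Prop :=
  (forall x y, g x = g y -> x = y) /\
  (forall y, exists x, g x = y) /\
  (forall u v, adj u v <-> adj (g u) (g v)).

(* g moves the edge uv iff {g u, g v} <> {u, v} as unordered pairs. *)
Definition moves_edge {V : Type} (g : V -> V) (u v : V) : Prop :=
  ~ ((g u = u /\ g v = v) \/ (g u = v /\ g v = u)).

(* The set of edges moved by g, with edges given as (ordered) pairs of adjacent
   vertices; each unordered edge appears twice, which does not affect
   (in)finiteness. *)
Definition moved_edges {V : Type} (adj : V -> V -> Prop) (g : V -> V) : V * V -> Prop :=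
  fun p => adj (fst p) (snd p) /\ moves_edge g (fst p) (snd p).

Definition infinite_edge_motion {V : Type} (adj : V -> V -> Prop) : Prop :=
  forall g, is_automorphism adj g -> (exists v, g v <> v) ->
    infinite_set (moved_edges adj g).

Definition induced_adj {V : Type} (adj : V -> V -> Prop) (M : V -> Prop) : V -> V -> Prop :=
  fun u v => M u /\ M v /\ adj u v.

Definition is_component {V : Type} (adj : V -> V -> Prop) (M : V -> Prop) (C : V -> Prop) : Prop :=
  exists v0, M v0 /\
    forall x, C x <-> (M x /\ clos_refl_trans V (induced_adj adj M) v0 x).

Definition moved_vertices {V : Type} (g : V -> V) : V -> Prop := fun v => g v <> v.

Definition infinite_degree {V : Type} (adj : V -> V -> Prop) (v : V) : Prop :=
  infinite_set (adj v).

(* Suppose every vertex of the finite component C has finite degree.  The image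
   B = g(C) is again a component of the moved vertices, so B = C or B and C are
   disjoint.  The map s that acts as g on C, as g^-1 on B \ C and as the identity
   elsewhere is then a non-trivial automorphism: the neighbours of C and B outside
   them are fixed by g, so gluing the pieces respects adjacency.  Every edge moved
   by s meets the finite set C u B of vertices of finite degree, so s moves only
   finitely many edges, contradicting infinite edge motion. *)

From Stdlib Require Import List Relations.Relation_Operators.
From Stdlib Require Import Classical ClassicalEpsilon.
Import ListNotations.

Definition image_set {X Y : Type} (f : X -> Y) (P : X -> Prop) : Y -> Prop :=
  fun y => exists x, P x /\ f x = y.

Lemma finite_set_incl {X : Type} (P Q : X -> Prop) :
  (forall x, P x -> Q x) -> finite_set Q -> finite_set P.
Proof. intros PQ [l Hl]; exists l; auto. Qed.

Lemma finite_set_union {X : Type} (P Q : X -> Prop) :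
  finite_set P -> finite_set Q -> finite_set (fun x => P x \/ Q x).
Proof.
  intros [l Hl] [m Hm]; exists (l ++ m).
  intros x [Px | Qx]; apply in_or_app; auto.
Qed.

Lemma finite_set_image {X Y : Type} (f : X -> Y) (P : X -> Prop) :
  finite_set P -> finite_set (image_set f P).
Proof.
  intros [l Hl]; exists (map f l).
  intros y [x [Px <-]]; apply in_map; auto.
Qed.

Lemma finite_set_bigcup {I X : Type} (A : I -> Prop) (F : I -> X -> Prop) :
  finite_set A -> (forall i, A i -> finite_set (F i)) ->
  finite_set (fun x => exists i, A i /\ F i x).
Proof.
  intros [l Hl]; revert A Hl.
  induction l as [| a l IH]; intros A Hl HF.
  - exists []; intros x [i [Ai _]]; exact (Hl i Ai).
  - set (A' := fun i => A i /\ i <> a).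
    assert (HA' : finite_set (fun x => exists i, A' i /\ F i x)).
    { apply IH.
      - intros i [Ai Hia]; destruct (Hl i Ai); [congruence | assumption].
      - intros i [Ai _]; auto. }
    assert (Ha : finite_set (fun x => A a /\ F a x)).
    { destruct (classic (A a)) as [Aa | nAa].
      - apply (finite_set_incl _ (F a)); [tauto | auto].
      - exists []; tauto. }
    refine (finite_set_incl _ _ _ (finite_set_union _ _ Ha HA')).
    intros x Hx; destruct Hx as [i [Ai Fix]].
    destruct (classic (i = a)) as [-> | Hia]; [left | right]; eauto.
    exists i; repeat split; auto.
Qed.

Lemma finite_incident_edges {V : Type} (adj : V -> V -> Prop) (D : V -> Prop) :
  (forall u v, adj u v -> adj v u) ->
  finite_set D -> (forall x, D x -> finite_set (adj x)) ->
  finite_set (fun p : V * V => (D (fst p) \/ D (snd p)) /\ adj (fst p) (snd p)).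
Proof.
  intros adj_sym HD Hdeg.
  pose proof (finite_set_bigcup D (fun x => image_set (pair x) (adj x)) HD
                (fun x Dx => finite_set_image _ _ (Hdeg x Dx))) as Hfst.
  pose proof (finite_set_bigcup D (fun x => image_set (fun y => (y, x)) (adj x)) HD
                (fun x Dx => finite_set_image _ _ (Hdeg x Dx))) as Hsnd.
  refine (finite_set_incl _ _ _ (finite_set_union _ _ Hfst Hsnd)).
  intros p Hp; destruct p as [x y], Hp as [[Dx | Dy] Hxy]; simpl in *.
  - left; exists x; split; [| exists y]; auto.
  - right; exists y; split; [| exists x]; auto.
Qed.

Lemma moved_edges_finite {V : Type} (adj : V -> V -> Prop) (s : V -> V) (D : V -> Prop) :
  (forall u v, adj u v -> adj v u) ->
  finite_set D -> (forall x, D x -> finite_set (adj x)) ->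
  (forall x, ~ D x -> s x = x) ->
  finite_set (moved_edges adj s).
Proof.
  intros adj_sym HD Hdeg Hfix.
  refine (finite_set_incl _ _ _ (finite_incident_edges adj D adj_sym HD Hdeg)).
  intros p Hp; destruct Hp as [Hadj Hmove]; split; [| exact Hadj].
  apply NNPP; intros HnD; apply Hmove; left.
  split; apply Hfix; tauto.
Qed.

Lemma automorphism_inverse {V : Type} (adj : V -> V -> Prop) (g : V -> V) :
  is_automorphism adj g ->
  exists h, (forall x, h (g x) = x) /\ (forall y, g (h y) = y).
Proof.
  intros [g_inj [g_surj _]].
  exists (fun y => proj1_sig (constructive_indefinite_description _ (g_surj y))).
  assert (gh : forall y, g (proj1_sig (constructive_indefinite_description _ (g_surj y))) = y)
    by (intros y; exact (proj2_sig (constructive_indefinite_description _ (g_surj y)))).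
  split; [intros x; apply g_inj |]; apply gh.
Qed.

Lemma moved_vertices_image {V : Type} (g : V -> V) :
  (forall x y, g x = g y -> x = y) ->
  forall x, moved_vertices g (g x) <-> moved_vertices g x.
Proof.
  intros g_inj x; unfold moved_vertices; split; intros Hx E; apply Hx.
  - now rewrite E.
  - now apply g_inj.
Qed.

Lemma clos_refl_trans_map {X : Type} (R : X -> X -> Prop) (f : X -> X) :
  (forall a b, R a b -> R (f a) (f b)) ->
  forall a b, clos_refl_trans X R a b -> clos_refl_trans X R (f a) (f b).
Proof.
  intros Hf a b H; induction H.
  - apply rt_step; auto.
  - apply rt_refl.
  - eapply rt_trans; eauto.
Qed.

Section Components.

Variables (V : Type) (adj : V -> V -> Prop) (M : V -> Prop).
Hypothesis adj_sym : forall u v, adj u v -> adj v u.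

Definition nbr_closed (A : V -> Prop) : Prop :=
  forall x y, A x -> M y -> adj x y -> A y.

Lemma component_incl C : is_component adj M C -> forall x, C x -> M x.
Proof. intros [v0 [_ HC]] x Cx; apply HC, Cx. Qed.

Lemma component_nbr_closed C : is_component adj M C -> nbr_closed C.
Proof.
  intros [v0 [_ HC]] x y Cx My Hxy.
  apply HC in Cx as [Mx Hx]; apply HC; split; [exact My |].
  eapply rt_trans; [exact Hx |]; apply rt_step; repeat split; auto.
Qed.

(* Symmetry of [adj] lets paths from the root be walked backwards. *)
Lemma component_sub_nbr_closed C A :
  is_component adj M C -> nbr_closed A ->
  forall c, C c -> A c -> forall x, C x -> A x.
Proof.
  intros [v0 [_ HC]] HA c Cc Ac x Cx.
  assert (Hpath : forall a b, clos_refl_trans V (induced_adj adj M) a b -> (A a <-> A b)).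
  { intros a b H; induction H as [a b [Ma [Mb Hab]] | | ]; try tauto.
    split; intros; eapply HA; eauto. }
  apply HC in Cc as [_ Hc]; apply HC in Cx as [_ Hx].
  apply (Hpath _ _ Hx), (Hpath _ _ Hc), Ac.
Qed.

Lemma components_meet_eq C C' :
  is_component adj M C -> is_component adj M C' ->
  forall c, C c -> C' c -> forall x, C x <-> C' x.
Proof.
  intros HC HC' c Cc C'c x; split.
  - apply (component_sub_nbr_closed C C' HC (component_nbr_closed C' HC') c Cc C'c).
  - apply (component_sub_nbr_closed C' C HC' (component_nbr_closed C HC) c C'c Cc).
Qed.

Lemma component_image C g :
  is_automorphism adj g -> (forall x, M (g x) <-> M x) ->
  is_component adj M C -> is_component adj M (image_set g C).
Proof.
  intros Hg HM [v0 [Mv0 HC]].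
  destruct (automorphism_inverse adj g Hg) as [h [hg gh]].
  destruct Hg as [_ [_ adj_g]].
  assert (HMh : forall y, M (h y) <-> M y) by (intros y; rewrite <- HM, gh; tauto).
  exists (g v0); split; [apply HM, Mv0 |].
  intros y; split.
  - intros [x [Cx <-]]; apply HC in Cx as [Mx Hx].
    split; [apply HM, Mx |].
    apply (clos_refl_trans_map _ g); [| exact Hx].
    intros a b [Ma [Mb Hab]]; repeat split; [apply HM | apply HM |]; auto.
    apply (proj1 (adj_g a b)), Hab.
  - intros [My Hy]; exists (h y); split; [| apply gh].
    apply HC; split; [apply HMh, My |].
    rewrite <- (hg v0).
    apply (clos_refl_trans_map _ h); [| exact Hy].
    intros a b [Ma [Mb Hab]]; repeat split; [apply HMh | apply HMh |]; auto.
    apply (proj2 (adj_g _ _)); rewrite !gh; exact Hab.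
Qed.

End Components.

Definition local_swap {V : Type} (g h : V -> V) (C B : V -> Prop) (x : V) : V :=
  if excluded_middle_informative (C x) then g x
  else if excluded_middle_informative (B x) then h x else x.

Section LocalSwapEquations.

Context {V : Type} {g h : V -> V} {C B : V -> Prop}.

Lemma local_swap_C x : C x -> local_swap g h C B x = g x.
Proof. intros Cx; unfold local_swap; destruct excluded_middle_informative; tauto. Qed.

Lemma local_swap_B x : ~ C x -> B x -> local_swap g h C B x = h x.
Proof.
  intros nCx Bx; unfold local_swap.
  destruct excluded_middle_informative; [tauto |].
  destruct excluded_middle_informative; tauto.
Qed.

Lemma local_swap_out x : ~ C x -> ~ B x -> local_swap g h C B x = x.
Proof.
  intros nCx nBx; unfold local_swap.
  destruct excluded_middle_informative; [tauto |].
  destruct excluded_middle_informative; tauto.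
Qed.

End LocalSwapEquations.

Section LocalSwapAdjacency.

Variables (V : Type) (adj : V -> V -> Prop) (g h : V -> V) (M C B : V -> Prop).
Hypothesis adj_sym : forall u v, adj u v -> adj v u.
Hypotheses (adj_g : forall u v, adj u v -> adj (g u) (g v))
  (adj_h : forall u v, adj u v -> adj (h u) (h v)).
Hypothesis fixed_out : forall x, ~ M x -> g x = x /\ h x = x.
Hypothesis B_M : forall x, B x -> M x.
Hypotheses (C_closed : nbr_closed V adj M C) (B_closed : nbr_closed V adj M B).

(* A neighbour of C outside C is not moved, hence fixed by g and not in B. *)
Lemma local_swap_nbr_C u v : C u -> adj u v -> local_swap g h C B v = g v.
Proof.
  intros Cu Huv; destruct (classic (C v)) as [Cv | nCv]; [exact (local_swap_C v Cv) |].
  assert (nMv : ~ M v) by (intros Mv; exact (nCv (C_closed u v Cu Mv Huv))).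
  rewrite local_swap_out; auto.
  symmetry; apply fixed_out, nMv.
Qed.

Lemma local_swap_nbr_B u v : ~ C u -> B u -> adj u v -> local_swap g h C B v = h v.
Proof.
  intros nCu Bu Huv.
  destruct (classic (C v)) as [Cv | nCv].
  { exfalso; exact (nCu (C_closed v u Cv (B_M u Bu) (adj_sym u v Huv))). }
  destruct (classic (B v)) as [Bv | nBv]; [exact (local_swap_B v nCv Bv) |].
  assert (nMv : ~ M v) by (intros Mv; exact (nBv (B_closed u v Bu Mv Huv))).
  rewrite local_swap_out; auto.
  symmetry; apply fixed_out, nMv.
Qed.

Lemma local_swap_adj u v :
  adj u v -> adj (local_swap g h C B u) (local_swap g h C B v).
Proof.
  intros Huv.
  destruct (classic (C u)) as [Cu | nCu].
  { rewrite (local_swap_C u Cu), (local_swap_nbr_C u v); auto. }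
  destruct (classic (B u)) as [Bu | nBu].
  { rewrite (local_swap_B u nCu Bu), (local_swap_nbr_B u v); auto. }
  pose proof (adj_sym u v Huv) as Hvu.
  destruct (classic (C v)) as [Cv | nCv].
  { rewrite (local_swap_C v Cv), (local_swap_nbr_C v u); auto. }
  destruct (classic (B v)) as [Bv | nBv].
  { rewrite (local_swap_B v nCv Bv), (local_swap_nbr_B v u); auto. }
  rewrite (local_swap_out u), (local_swap_out v); auto.
Qed.

End LocalSwapAdjacency.

Section LocalSwapInverse.

Variables (V : Type) (g h : V -> V) (C B : V -> Prop).
Hypotheses (hg : forall x, h (g x) = x) (gh : forall y, g (h y) = y).
Hypotheses (g_C : forall x, C x -> B (g x)) (h_B : forall x, B x -> C (h x)).
Hypothesis C_B_meet : forall x, C x -> B x -> forall y, C y <-> B y.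

Lemma local_swap_cancel x : local_swap h g B C (local_swap g h C B x) = x.
Proof.
  destruct (classic (C x)) as [Cx | nCx].
  { rewrite (local_swap_C x Cx), (local_swap_C (g x)); auto. }
  destruct (classic (B x)) as [Bx | nBx].
  - assert (nBhx : ~ B (h x)).
    { intros Bhx; apply nCx, (C_B_meet (h x)); auto. }
    rewrite (local_swap_B x nCx Bx), (local_swap_B (h x)); auto.
  - rewrite (local_swap_out x nCx nBx), (local_swap_out x); auto.
Qed.

End LocalSwapInverse.

(* The inverse is [local_swap h g B C]: the same construction with the roles of
   (g, C) and (h, B) exchanged. *)
Lemma local_swap_automorphism {V : Type} (adj : V -> V -> Prop) (g h : V -> V)
  (M C B : V -> Prop) :
  (forall u v, adj u v -> adj v u) ->
  (forall u v, adj u v <-> adj (g u) (g v)) ->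
  (forall x, h (g x) = x) -> (forall y, g (h y) = y) ->
  (forall x, ~ M x -> g x = x) ->
  (forall x, C x -> M x) -> (forall x, B x -> M x) ->
  nbr_closed V adj M C -> nbr_closed V adj M B ->
  (forall x, C x -> B (g x)) -> (forall x, B x -> C (h x)) ->
  (forall x, C x -> B x -> forall y, C y <-> B y) ->
  is_automorphism adj (local_swap g h C B).
Proof.
  intros adj_sym adj_g hg gh g_fix C_M B_M C_cl B_cl g_C h_B meet.
  assert (adj_g' : forall u v, adj u v -> adj (g u) (g v))
    by (intros u v; apply adj_g).
  assert (adj_h : forall u v, adj u v -> adj (h u) (h v))
    by (intros u v Huv; apply adj_g; rewrite !gh; exact Huv).
  assert (fixed : forall x, ~ M x -> g x = x /\ h x = x)
    by (intros x Mx; split; [auto | rewrite <- (g_fix x Mx) at 1; apply hg]).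
  assert (fixed' : forall x, ~ M x -> h x = x /\ g x = x)
    by (intros x Mx; destruct (fixed x Mx); auto).
  assert (meet' : forall x, B x -> C x -> forall y, B y <-> C y)
    by (intros x Bx Cx y; symmetry; eauto).
  pose proof (local_swap_cancel V g h C B hg gh g_C h_B meet) as ts.
  pose proof (local_swap_cancel V h g B C gh hg h_B g_C meet') as st.
  split; [| split].
  - intros x y E; rewrite <- (ts x), <- (ts y), E; reflexivity.
  - intros y; exists (local_swap h g B C y); apply st.
  - intros u v; split.
    + apply (local_swap_adj V adj g h M C B); auto.
    + intros Hs; rewrite <- (ts u), <- (ts v).
      apply (local_swap_adj V adj h g M B C); auto.
Qed.

Theorem mainTheorem1 (V : Type) (adj : V -> V -> Prop)
  (HG : simple_graph V adj)
  (Hmot : infinite_edge_motion adj)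
  (g : V -> V) (Hg : is_automorphism adj g)
  (C : V -> Prop) (HC : is_component adj (moved_vertices g) C)
  (Hfin : finite_set C) :
  exists v, C v /\ infinite_degree adj v.
Proof.
  apply NNPP; intros Hno.
  assert (Hdeg : forall v, C v -> finite_set (adj v))
    by (intros v Cv; apply NNPP; intros Hinf; eauto).
  set (M := moved_vertices g).
  set (B := image_set g C).
  pose proof (sg_sym _ _ HG) as adj_sym.
  pose proof Hg as [g_inj [_ adj_g]].
  destruct (automorphism_inverse adj g Hg) as [h [hg gh]].
  assert (HM : forall x, M (g x) <-> M x) by apply (moved_vertices_image g g_inj).
  assert (HB : is_component adj M B) by (apply component_image; auto).
  assert (Hs : is_automorphism adj (local_swap g h C B)).
  { apply (local_swap_automorphism adj g h M); auto.
    - intros x Mx; apply NNPP, Mx.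
    - exact (component_incl V adj M C HC).
    - exact (component_incl V adj M B HB).
    - exact (component_nbr_closed V adj M C HC).
    - exact (component_nbr_closed V adj M B HB).
    - intros x Cx; exists x; auto.
    - intros y [x [Cx <-]]; rewrite hg; exact Cx.
    - intros x Cx Bx; apply (components_meet_eq V adj M adj_sym C B HC HB x Cx Bx). }
  destruct HC as [v0 [Mv0 HC]].
  apply (Hmot _ Hs).
  - exists v0; rewrite local_swap_C; [exact Mv0 | apply HC; split; auto; apply rt_refl].
  - apply (moved_edges_finite adj _ (fun x => C x \/ B x) adj_sym).
    + apply finite_set_union; [| apply finite_set_image]; exact Hfin.
    + intros x [Cx | [u [Cu <-]]]; [auto |].
      apply (finite_set_incl _ (image_set g (adj u))); [| apply finite_set_image; auto].
      intros y Hy; exists (h y); split; [apply adj_g; rewrite gh; exact Hy | apply gh].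
    + intros x Hx; apply local_swap_out; tauto.
Qed.
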